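(* The algorithm Balance2 is not competitive for the infinite server problem on the real line.
   Context: Infinite server problem on the real line: an unbounded number of servers initially reside at a source point; a finite sequence of requests is revealed one by one; each must be served immediately, without knowledge of future requests, by moving a server to it; the cost is the total distance traveled. Balance2 serves a request $r$ by moving to $r$ a server $x$ minimizing $D_x+2d(x,r)$, where $D_x$ is the cumulative distance traveled by $x$ so far and $d(x,r)$ is its distance to $r$ (servers still at the source have $D_x=0$). An online algorithm is competitive if there are $\rho,c$ with $ALG(\sigma)\le\rho\,OPT(\sigma)+c$ for all request sequences $\sigma$. *)

From Stdlib Require Import Reals List Arith.
Import ListNotations.
Open Scope R_scope.

(* Infinitely many servers, indexed by nat.  A configuration records for each
   server its current position and the cumulative distance D_x it has
   travelled so far. *)
Definition config := nat -> (R * R).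

Definition init_config (s : R) : config := fun _ => (s, 0).

Definition pos (c : config) (i : nat) : R := fst (c i).
Definition dist_travelled (c : config) (i : nat) : R := snd (c i).

Definition bal2_value (c : config) (i : nat) (r : R) : R :=
  dist_travelled c i + 2 * Rabs (pos c i - r).

Definition move (c : config) (i : nat) (r : R) : config :=
  fun j => if Nat.eqb j i
           then (r, dist_travelled c i + Rabs (pos c i - r))
           else c j.

(* At each step the
   server moved is any minimiser of D_x + 2 d(x,r) (arbitrary tie-breaking,
   hence a relation). *)
Inductive bal2_run : config -> list R -> R -> Prop :=
| bal2_nil (c : config) : bal2_run c [] 0
| bal2_cons (c : config) (r : R) (rs : list R) (i : nat) (cost : R) :
    (forall j, bal2_value c i r <= bal2_value c j r) ->
    bal2_run (move c i r) rs cost ->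
    bal2_run c (r :: rs) (Rabs (pos c i - r) + cost).

(* Offline solutions: a schedule assigns to each request the (index of the)
   server that serves it; [p] gives current server positions. *)
Fixpoint sched_cost (p : nat -> R) (sigma : list R) (S : list nat) : R :=
  match sigma, S with
  | r :: rs, i :: is =>
      Rabs (p i - r) + sched_cost (fun j => if Nat.eqb j i then r else p j) rs is
  | _, _ => 0
  end.

Definition valid_schedule (sigma : list R) (S : list nat) : Prop :=
  length S = length sigma.

Definition is_OPT (s : R) (sigma : list R) (v : R) : Prop :=
  (exists S, valid_schedule sigma S /\ sched_cost (fun _ => s) sigma S = v) /\
  (forall S, valid_schedule sigma S -> v <= sched_cost (fun _ => s) sigma S).

From Pilot Require Import Defs.
From Stdlib Require Import Reals List Lra Lia FunctionalExtensionality Psatz.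
Import ListNotations.
Open Scope R_scope.

(* Balance2 is fooled by phases of decreasing height.  In the phase of height
   b = 2(k+1), a request at s + b is served by a fresh server at cost b, and
   then k rounds of requests at s + b + 1 and s + b are all served by that same
   server: its priority stays below 2(b+1), the priority of a fresh server,
   while every server used in an earlier, higher phase has priority larger
   still.  Running the phases for k = 2m, 2m-1, ..., m costs Balance2 at least
   2m(m+1), whereas an offline schedule keeping two servers at s + b and
   s + b + 1 and shifting both down by 2 per phase costs only 12m + 5. *)

(** * Existence of an optimal offline schedule *)

Lemma sched_cost_ge0 (p : nat -> R) (sigma : list R) (S : list nat) :
  0 <= sched_cost p sigma S.
Proof.
  revert p S; induction sigma as [|r rs IH]; intros p [|i S]; simpl; try lra.
  pose proof (Rabs_pos (p i - r)).
  pose proof (IH (fun j => if Nat.eqb j i then r else p j) S).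
  lra.
Qed.

Lemma sched_cost_map (p : nat -> R) (sigma : list R) (S : list nat) (f : nat -> nat) :
  (forall a b, f a = f b -> a = b) ->
  sched_cost p sigma (map f S) = sched_cost (fun j => p (f j)) sigma S.
Proof.
  intros f_inj; revert p S; induction sigma as [|r rs IH]; intros p [|i S]; simpl; auto.
  rewrite IH; do 2 f_equal.
  apply functional_extensionality; intro j.
  destruct (Nat.eqb_spec j i) as [->|ne]; [now rewrite Nat.eqb_refl|].
  destruct (Nat.eqb_spec (f j) (f i)) as [e|]; [now apply f_inj in e|reflexivity].
Qed.

Lemma argmin_bounded_index {A : Type} (G : nat -> A -> R) (ok : A -> Prop) (m : nat) :
  (forall i, (i <= m)%nat -> exists T, ok T /\ forall T', ok T' -> G i T <= G i T') ->
  exists i0 T0, (i0 <= m)%nat /\ ok T0 /\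
    forall i T, (i <= m)%nat -> ok T -> G i0 T0 <= G i T.
Proof.
  induction m as [|m IH]; intros Hmin.
  - destruct (Hmin 0%nat (le_n 0)) as [T [okT HT]].
    exists 0%nat, T; repeat split; auto.
    intros i T' Hi okT'; replace i with 0%nat by lia; auto.
  - destruct IH as [i0 [T0 [Hi0 [okT0 HT0]]]]; [intros i Hi; apply Hmin; lia|].
    destruct (Hmin (S m) (le_n _)) as [T1 [okT1 HT1]].
    destruct (Rle_or_lt (G i0 T0) (G (S m) T1)) as [Hle|Hlt].
    + exists i0, T0; repeat split; auto.
      intros i T Hi okT; destruct (Nat.eq_dec i (S m)) as [->|ne].
      * eapply Rle_trans; [exact Hle|auto].
      * apply HT0; auto; lia.
    + exists (S m), T1; repeat split; auto.
      intros i T Hi okT; destruct (Nat.eq_dec i (S m)) as [->|ne]; auto.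
      eapply Rle_trans; [left; exact Hlt|apply HT0; auto; lia].
Qed.

Definition transpose_nat (m i j : nat) : nat :=
  if Nat.eqb j m then i else if Nat.eqb j i then m else j.

Lemma transpose_nat_inj (m i a b : nat) : transpose_nat m i a = transpose_nat m i b -> a = b.
Proof.
  unfold transpose_nat.
  destruct (Nat.eqb_spec a m), (Nat.eqb_spec b m), (Nat.eqb_spec a i), (Nat.eqb_spec b i);
    lia.
Qed.

(* Servers with index at least m are interchangeable, so it suffices to
   minimise over the first server index in [0, m], relabelling by a
   transposition otherwise. *)
Lemma sched_cost_has_min (v : R) (sigma : list R) (p : nat -> R) (m : nat) :
  (forall j, (m <= j)%nat -> p j = v) ->
  exists S0, length S0 = length sigma /\
    forall S, length S = length sigma -> sched_cost p sigma S0 <= sched_cost p sigma S.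
Proof.
  revert p m; induction sigma as [|r rs IH]; intros p m Hp.
  - exists []; split; auto; intros [|] HS; simpl in *; [lra|discriminate].
  - set (G i S := Rabs (p i - r) + sched_cost (fun j => if Nat.eqb j i then r else p j) rs S).
    destruct (argmin_bounded_index G (fun S => length S = length rs) m)
      as [i0 [S0 [Hi0 [HS0 Hmin]]]].
    { intros i Hi.
      destruct (IH (fun j => if Nat.eqb j i then r else p j) (S m)) as [T [HT Hopt]].
      { intros j Hj; destruct (Nat.eqb_spec j i); [lia|apply Hp; lia]. }
      exists T; split; auto; intros T' HT'; unfold G; specialize (Hopt T' HT'); lra. }
    exists (i0 :: S0); split; [simpl; auto|].
    intros [|i S] HS; simpl in HS; [discriminate|injection HS as HS].
    change (G i0 S0 <= G i S).
    destruct (Nat.le_gt_cases i m) as [Hi|Hi]; [now apply Hmin|].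
    replace (G i S) with (G m (map (transpose_nat m i) S)); [apply Hmin; rewrite ?length_map; auto|].
    unfold G; rewrite sched_cost_map by apply transpose_nat_inj.
    rewrite (Hp i), (Hp m) by lia; do 2 f_equal.
    apply functional_extensionality; intro j; unfold transpose_nat.
    destruct (Nat.eqb_spec j m) as [->|ne_m].
    + destruct (Nat.eqb_spec m i), (Nat.eqb_spec i m); try lia.
      rewrite (Hp i), (Hp m) by lia; reflexivity.
    + destruct (Nat.eqb_spec j i); [now rewrite Nat.eqb_refl|].
      destruct (Nat.eqb_spec j m); [lia|reflexivity].
Qed.

Lemma is_OPT_exists (s : R) (sigma : list R) : exists v, is_OPT s sigma v.
Proof.
  destruct (sched_cost_has_min s sigma (fun _ => s) 0) as [S0 [HS0 Hmin]]; auto.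
  exists (sched_cost (fun _ => s) sigma S0); split; [exists S0; auto|exact Hmin].
Qed.

(** * Runs of Balance2 *)

Definition bal2_minimizer (c : config) (i : nat) (r : R) : Prop :=
  forall j, bal2_value c i r <= bal2_value c j r.

Definition bal2_cost_ge (c : config) (sigma : list R) (LB : R) : Prop :=
  (exists cost, bal2_run c sigma cost) /\
  (forall cost, bal2_run c sigma cost -> LB <= cost).

(* Reals rebinds [pos] to the projection of [posreal], hence [Defs.pos]. *)
Lemma bal2_run_cons_inv (c : config) (r : R) (rs : list R) (cost : R) :
  bal2_run c (r :: rs) cost ->
  exists i cost', bal2_minimizer c i r /\ bal2_run (move c i r) rs cost' /\
    cost = Rabs (Defs.pos c i - r) + cost'.
Proof. intros H; inversion H; subst; eauto. Qed.

Lemma bal2_cost_ge_nil (c : config) : bal2_cost_ge c [] 0.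
Proof.
  split; [exists 0; constructor|].
  intros cost H; inversion H; lra.
Qed.

Lemma bal2_cost_ge_weaken (c : config) (sigma : list R) (LB LB' : R) :
  LB' <= LB -> bal2_cost_ge c sigma LB -> bal2_cost_ge c sigma LB'.
Proof.
  intros Hle [Hrun Hlb]; split; auto.
  intros cost H; specialize (Hlb cost H); lra.
Qed.

Lemma bal2_cost_ge_cons (c : config) (r : R) (rest : list R) (d LB : R) :
  (exists i, bal2_minimizer c i r) ->
  (forall i, bal2_minimizer c i r ->
     d <= Rabs (Defs.pos c i - r) /\ bal2_cost_ge (move c i r) rest LB) ->
  bal2_cost_ge c (r :: rest) (d + LB).
Proof.
  intros [i0 Hi0] Hstep; split.
  - destruct (Hstep i0 Hi0) as [_ [[cost Hrun] _]].
    exists (Rabs (Defs.pos c i0 - r) + cost); now constructor.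
  - intros cost Hrun.
    destruct (bal2_run_cons_inv _ _ _ _ Hrun) as [i [cost' [Hi [Hrun' ->]]]].
    destruct (Hstep i Hi) as [Hd [_ Hlb]]; specialize (Hlb _ Hrun'); lra.
Qed.

Lemma move_same (c : config) (i : nat) (r : R) :
  move c i r i = (r, dist_travelled c i + Rabs (Defs.pos c i - r)).
Proof. unfold move; now rewrite Nat.eqb_refl. Qed.

Lemma move_other (c : config) (i : nat) (r : R) (j : nat) :
  j <> i -> move c i r j = c j.
Proof. intros ne; unfold move; now apply Nat.eqb_neq in ne as ->. Qed.

(** * The adversarial phases *)

Section Phases.

Variable s : R.

Definition fresh (c : config) (j : nat) : Prop := c j = (s, 0).

(* A server retired from the phase of height b sits at s + b having travelled
   2b - 2, so it is spent for every h <= b - 1. *)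
Definition spent (h : R) (c : config) (j : nat) : Prop :=
  Defs.pos c j - s > h /\ dist_travelled c j + 2 * (Defs.pos c j - s) > 4 * h.

Definition eventually_fresh (c : config) : Prop :=
  exists M, forall j, (M <= j)%nat -> fresh c j.

Definition others_idle (c : config) (L : nat) (h : R) : Prop :=
  forall j, j <> L -> fresh c j \/ spent h c j.

Definition phase_start (c : config) (h : R) : Prop :=
  (forall j, fresh c j \/ spent h c j) /\ eventually_fresh c.

Lemma bal2_value_fresh (c : config) (j : nat) (x : R) :
  fresh c j -> 0 <= x -> bal2_value c j (s + x) = 2 * x.
Proof.
  intros Hf Hx; unfold bal2_value, dist_travelled, Defs.pos; rewrite Hf; simpl.
  replace (s - (s + x)) with (- x) by ring.
  rewrite Rabs_Ropp, Rabs_right by lra; ring.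
Qed.

Lemma bal2_value_spent (h : R) (c : config) (j : nat) (x : R) :
  spent h c j -> x <= h -> 2 * x < bal2_value c j (s + x).
Proof.
  intros [Hpos Hdist] Hx; unfold bal2_value.
  rewrite Rabs_right by lra; lra.
Qed.

Lemma bal2_value_at (c : config) (j : nat) (y D x : R) :
  c j = (s + y, D) -> bal2_value c j (s + x) = D + 2 * Rabs (y - x).
Proof.
  intros Hj; unfold bal2_value, dist_travelled, Defs.pos; rewrite Hj; simpl.
  now replace (s + y - (s + x)) with (y - x) by ring.
Qed.

Lemma move_fresh (c : config) (i : nat) (x : R) :
  fresh c i -> 0 <= x -> move c i (s + x) i = (s + x, x).
Proof.
  intros Hf Hx; rewrite move_same; unfold dist_travelled, Defs.pos; rewrite Hf; simpl.
  replace (s - (s + x)) with (- x) by ring.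
  rewrite Rabs_Ropp, Rabs_right by lra; f_equal; ring.
Qed.

Lemma move_at (c : config) (i : nat) (y D x : R) :
  c i = (s + y, D) -> move c i (s + x) i = (s + x, D + Rabs (y - x)).
Proof.
  intros Hi; rewrite move_same; unfold dist_travelled, Defs.pos; rewrite Hi; simpl.
  now replace (s + y - (s + x)) with (y - x) by ring.
Qed.

Lemma spent_antimono (h h' : R) (c : config) (j : nat) :
  h' <= h -> spent h c j -> spent h' c j.
Proof. intros Hh [H1 H2]; split; lra. Qed.

Lemma fresh_or_spent_antimono (h h' : R) (c : config) (j : nat) :
  h' <= h -> fresh c j \/ spent h c j -> fresh c j \/ spent h' c j.
Proof. intros Hh [Hf|Hsp]; [now left|right; exact (spent_antimono _ _ _ _ Hh Hsp)]. Qed.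

Lemma eventually_fresh_move (c : config) (i : nat) (r : R) :
  eventually_fresh c -> eventually_fresh (move c i r).
Proof.
  intros [M HM]; exists (Nat.max M (S i)); intros j Hj.
  unfold fresh; rewrite move_other by lia; apply HM; lia.
Qed.

Lemma others_idle_move (c : config) (L : nat) (h r : R) :
  others_idle c L h -> others_idle (move c L r) L h.
Proof.
  intros Hidle j ne; unfold fresh, spent, Defs.pos, dist_travelled.
  rewrite move_other by exact ne; apply Hidle, ne.
Qed.

Lemma bal2_minimizer_fresh (c : config) (h x : R) :
  phase_start c h -> 0 <= x -> x <= h ->
  (exists i, bal2_minimizer c i (s + x)) /\
  (forall i, bal2_minimizer c i (s + x) -> fresh c i).
Proof.
  intros [Hall [M HM]] Hx Hxh.
  assert (HfM : fresh c M) by (apply HM; lia).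
  split.
  - exists M; intro j; rewrite (bal2_value_fresh _ _ _ HfM Hx).
    destruct (Hall j) as [Hf|Hsp].
    + rewrite (bal2_value_fresh _ _ _ Hf Hx); lra.
    + pose proof (bal2_value_spent _ _ _ _ Hsp Hxh); lra.
  - intros i Hi; destruct (Hall i) as [Hf|Hsp]; auto.
    specialize (Hi M); rewrite (bal2_value_fresh _ _ _ HfM Hx) in Hi.
    pose proof (bal2_value_spent _ _ _ _ Hsp Hxh); lra.
Qed.

Lemma bal2_minimizer_live (c : config) (L : nat) (y D h x : R) :
  c L = (s + y, D) -> others_idle c L h -> 0 <= x -> x <= h ->
  D + 2 * Rabs (y - x) < 2 * x ->
  bal2_minimizer c L (s + x) /\ (forall i, bal2_minimizer c i (s + x) -> i = L).
Proof.
  intros HL Hidle Hx Hxh Hlow; rewrite <- (bal2_value_at _ _ _ _ x HL) in Hlow.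
  assert (Hbeaten : forall j, j <> L -> bal2_value c L (s + x) < bal2_value c j (s + x)).
  { intros j ne; destruct (Hidle j ne) as [Hf|Hsp].
    - rewrite (bal2_value_fresh _ _ _ Hf Hx); lra.
    - pose proof (bal2_value_spent _ _ _ _ Hsp Hxh); lra. }
  split.
  - intro j; destruct (Nat.eq_dec j L) as [->|ne]; [lra|left; now apply Hbeaten].
  - intros i Hi; destruct (Nat.eq_dec i L) as [->|ne]; auto.
    specialize (Hi L); specialize (Hbeaten i ne); lra.
Qed.

Lemma bal2_live_step (c : config) (L : nat) (y D h x : R) (rest : list R) (LB : R) :
  c L = (s + y, D) -> others_idle c L h -> 0 <= x -> x <= h ->
  D + 2 * Rabs (y - x) < 2 * x ->
  bal2_cost_ge (move c L (s + x)) rest LB ->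
  bal2_cost_ge c (s + x :: rest) LB.
Proof.
  intros HL Hidle Hx Hxh Hlow Hrest.
  destruct (bal2_minimizer_live _ _ _ _ _ _ HL Hidle Hx Hxh Hlow) as [HLmin Huniq].
  replace LB with (0 + LB) by ring.
  apply bal2_cost_ge_cons; [now exists L|].
  intros i Hi; rewrite (Huniq i Hi); split; [apply Rabs_pos|exact Hrest].
Qed.

Fixpoint rounds (b : R) (n : nat) : list R :=
  match n with
  | O => []
  | S n => (s + (b + 1)) :: (s + b) :: rounds b n
  end.

Definition phase (k : nat) : list R :=
  (s + 2 * INR (S k)) :: rounds (2 * INR (S k)) k.

Fixpoint phases (m i : nat) : list R :=
  match m with
  | O => []
  | S m' => phase (m' + i) ++ phases m' i
  end.

Lemma bal2_rounds (n : nat) (c : config) (L : nat) (D b : R) (rest : list R) (LB : R) :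
  0 <= b -> c L = (s + b, D) -> others_idle c L (b + 1) -> eventually_fresh c ->
  D + 2 * INR n + 1 < 2 * b ->
  (forall c', c' L = (s + b, D + 2 * INR n) -> others_idle c' L (b + 1) ->
     eventually_fresh c' -> bal2_cost_ge c' rest LB) ->
  bal2_cost_ge c (rounds b n ++ rest) LB.
Proof.
  revert c D; induction n as [|n IH]; intros c D Hb HL Hidle Hfin Hlow Hrest.
  - apply Hrest; auto; rewrite HL; f_equal; simpl; ring.
  - rewrite S_INR in Hlow; pose proof (pos_INR n).
    assert (Hup : Rabs (b - (b + 1)) = 1).
    { replace (b - (b + 1)) with (- (1)) by ring; now rewrite Rabs_Ropp, Rabs_R1. }
    assert (Hdown : Rabs (b + 1 - b) = 1).
    { replace (b + 1 - b) with 1 by ring; apply Rabs_R1. }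
    simpl; apply (bal2_live_step c L b D (b + 1));
      [exact HL|exact Hidle|lra|lra|rewrite Hup; lra|].
    set (c1 := move c L (s + (b + 1))).
    assert (HL1 : c1 L = (s + (b + 1), D + 1)) by (unfold c1; now rewrite (move_at _ _ _ _ _ HL), Hup).
    apply (bal2_live_step c1 L (b + 1) (D + 1) (b + 1));
      [exact HL1|now apply others_idle_move|lra|lra|rewrite Hdown; lra|].
    apply IH with (D := D + 2); try lra.
    + rewrite (move_at _ _ _ _ _ HL1), Hdown; f_equal; ring.
    + now do 2 apply others_idle_move.
    + now do 2 apply eventually_fresh_move.
    + intros c' HL' Hidle' Hfin'; apply Hrest; auto.
      rewrite HL', S_INR; f_equal; ring.
Qed.

Lemma bal2_phase (k : nat) (c : config) (rest : list R) (LB : R) :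
  phase_start c (2 * INR (S k) + 1) ->
  (forall c', phase_start c' (2 * INR (S k) - 1) -> bal2_cost_ge c' rest LB) ->
  bal2_cost_ge c (phase k ++ rest) (2 * INR (S k) + LB).
Proof.
  intros Hstart Hrest; unfold phase; set (b := 2 * INR (S k)) in *.
  assert (Hb : b = 2 * INR k + 2) by (unfold b; rewrite S_INR; ring).
  pose proof (pos_INR k).
  destruct (bal2_minimizer_fresh c (b + 1) b Hstart ltac:(lra) ltac:(lra)) as [Hex Hfresh].
  simpl; apply bal2_cost_ge_cons; auto.
  intros i Hi; specialize (Hfresh i Hi).
  split.
  - unfold Defs.pos; rewrite Hfresh; simpl.
    replace (s - (s + b)) with (- b) by ring; rewrite Rabs_Ropp, Rabs_right by lra; lra.
  - apply bal2_rounds with (L := i) (D := b); try lra.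
    + apply move_fresh; [exact Hfresh|lra].
    + intros j ne; unfold fresh, spent, Defs.pos, dist_travelled; rewrite move_other by exact ne.
      apply (proj1 Hstart).
    + apply eventually_fresh_move, (proj2 Hstart).
    + intros c' HL' Hidle' Hfin'; apply Hrest; split; auto.
      intro j; destruct (Nat.eq_dec j i) as [->|ne].
      * right; unfold spent, Defs.pos, dist_travelled; rewrite HL'; simpl; split; lra.
      * apply (fresh_or_spent_antimono (b + 1)); [lra|exact (Hidle' j ne)].
Qed.

Lemma bal2_phases (i m : nat) (c : config) :
  phase_start c (2 * INR (m + i) + 1) ->
  bal2_cost_ge c (phases m i) (INR m * (2 * INR i)).
Proof.
  revert c; induction m as [|m IH]; intros c Hstart.
  - simpl; replace (0 * (2 * INR i)) with 0 by ring; apply bal2_cost_ge_nil.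
  - apply (bal2_cost_ge_weaken _ _ (2 * INR (S (m + i)) + INR m * (2 * INR i))).
    + rewrite !S_INR, plus_INR; pose proof (pos_INR m); pose proof (pos_INR i); nra.
    + apply bal2_phase.
      * replace (S (m + i)) with (S m + i)%nat by lia; exact Hstart.
      * intros c' Hc'; apply IH.
        destruct Hc' as [Hall Hfin]; split; auto.
        intro j; apply (fresh_or_spent_antimono (2 * INR (S (m + i)) - 1)); auto.
        rewrite S_INR; lra.
Qed.

Lemma phase_start_init (h : R) : phase_start (init_config s) h.
Proof. split; [intro j; now left|exists 0%nat; intros j _; reflexivity]. Qed.

(** * An offline schedule for the phases *)

Fixpoint rounds_sched (n : nat) : list nat :=
  match n with O => [] | S n => 1%nat :: 0%nat :: rounds_sched n end.

Fixpoint phases_sched (m i : nat) : list nat :=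
  match m with
  | O => []
  | S m' => (0%nat :: rounds_sched (m' + i)) ++ phases_sched m' i
  end.

Lemma length_rounds (b : R) (n : nat) : length (rounds b n) = length (rounds_sched n).
Proof. induction n; simpl; auto. Qed.

Lemma length_phases_sched (m i : nat) : length (phases_sched m i) = length (phases m i).
Proof.
  induction m; simpl; auto.
  rewrite !length_app; simpl; now rewrite length_rounds, IHm.
Qed.

Lemma sched_cost_rounds (b : R) (n : nat) (p : nat -> R) (rest : list R) (S' : list nat) :
  p 0%nat = s + b -> p 1%nat = s + (b + 1) ->
  exists q, q 0%nat = s + b /\ q 1%nat = s + (b + 1) /\
    sched_cost p (rounds b n ++ rest) (rounds_sched n ++ S') = sched_cost q rest S'.
Proof.
  revert p; induction n as [|n IH]; intros p H0 H1; [exists p; auto|].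
  simpl; rewrite H0, H1.
  destruct (IH (fun j => if Nat.eqb j 0 then s + b
                        else if Nat.eqb j 1 then s + (b + 1) else p j))
    as [q [Hq0 [Hq1 Hq]]]; auto.
  exists q; repeat split; auto; rewrite <- Hq.
  rewrite !Rminus_diag, Rabs_R0, !Rplus_0_l; reflexivity.
Qed.

Lemma sched_cost_phase (k : nat) (p : nat -> R) (rest : list R) (S' : list nat) :
  (1 <= k)%nat ->
  exists q, q 0%nat = s + 2 * INR (S k) /\ q 1%nat = s + (2 * INR (S k) + 1) /\
    sched_cost p (phase k ++ rest) ((0%nat :: rounds_sched k) ++ S') =
    Rabs (p 0%nat - (s + 2 * INR (S k))) + Rabs (p 1%nat - (s + (2 * INR (S k) + 1)))
    + sched_cost q rest S'.
Proof.
  intros Hk; destruct k as [|n]; [lia|].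
  unfold phase; set (b := 2 * INR (S (S n))); simpl.
  destruct (sched_cost_rounds b n
              (fun j => if Nat.eqb j 0 then s + b
                        else if Nat.eqb j 1 then s + (b + 1)
                        else if Nat.eqb j 0 then s + b else p j) rest S')
    as [q [Hq0 [Hq1 Hq]]]; auto.
  exists q; repeat split; auto; rewrite Hq.
  rewrite Rminus_diag, Rabs_R0; ring.
Qed.

Lemma sched_cost_phases (i m : nat) (p : nat -> R) :
  (1 <= i)%nat ->
  sched_cost p (phases (S m) i) (phases_sched (S m) i) =
  Rabs (p 0%nat - (s + 2 * INR (S (m + i))))
  + Rabs (p 1%nat - (s + (2 * INR (S (m + i)) + 1))) + 4 * INR m.
Proof.
  intros Hi; revert p; induction m as [|m IH]; intros p.
  - destruct (sched_cost_phase (0 + i) p [] [] ltac:(lia)) as [q [_ [_ Hq]]].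
    simpl in Hq |- *; rewrite app_nil_r in Hq; rewrite app_nil_r, Hq; ring.
  - change (phases (S (S m)) i) with (phase (S m + i) ++ phases (S m) i).
    change (phases_sched (S (S m)) i)
      with ((0%nat :: rounds_sched (S m + i)) ++ phases_sched (S m) i).
    destruct (sched_cost_phase (S m + i) p (phases (S m) i) (phases_sched (S m) i)
                ltac:(lia)) as [q [Hq0 [Hq1 Hq]]].
    rewrite Hq, IH, Hq0, Hq1; simpl plus; rewrite !(S_INR (S (m + i))), (S_INR m).
    replace (s + 2 * (INR (S (m + i)) + 1) - (s + 2 * INR (S (m + i)))) with 2 by ring.
    replace (s + (2 * (INR (S (m + i)) + 1) + 1) - (s + (2 * INR (S (m + i)) + 1)))
      with 2 by ring.
    rewrite (Rabs_right 2) by lra; ring.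
Qed.

Lemma opt_phases_le (m : nat) (v : R) :
  (1 <= m)%nat -> is_OPT s (phases (S m) m) v -> v <= 12 * INR m + 5.
Proof.
  intros Hm [_ Hopt].
  specialize (Hopt _ (length_phases_sched (S m) m)).
  rewrite sched_cost_phases in Hopt by exact Hm.
  rewrite S_INR, plus_INR in Hopt; pose proof (pos_INR m).
  rewrite Rabs_left1, (Rabs_left1 (s - _)) in Hopt by lra; lra.
Qed.

End Phases.

Lemma affine_lt_quadratic (rho c v x : R) :
  0 <= v -> v <= 12 * x + 5 -> 6 * Rabs rho + Rabs c + 10 < x ->
  rho * v + c < (x + 1) * (2 * x).
Proof.
  intros Hv0 Hv Hx.
  pose proof (Rabs_pos rho); pose proof (Rabs_pos c).
  assert (rho * v <= Rabs rho * v) by (apply Rmult_le_compat_r; [lra|apply Rle_abs]).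
  assert (c <= Rabs c) by apply Rle_abs.
  assert (Rabs rho * v <= Rabs rho * (12 * x + 5)) by (apply Rmult_le_compat_l; lra).
  nra.
Qed.

Theorem proposition5 :
  forall (s rho c : R),
    exists (sigma : list R) (opt : R),
      is_OPT s sigma opt /\
      (exists cost, bal2_run (init_config s) sigma cost) /\
      (forall cost, bal2_run (init_config s) sigma cost -> rho * opt + c < cost).
Proof.
  intros s rho c.
  destruct (INR_archimed 1 (6 * Rabs rho + Rabs c + 10) ltac:(lra)) as [m Hm].
  rewrite Rmult_1_r in Hm.
  assert (Hm1 : (1 <= m)%nat).
  { destruct m; [simpl in Hm; pose proof (Rabs_pos rho); pose proof (Rabs_pos c); lra|lia]. }
  destruct (is_OPT_exists s (phases s (S m) m)) as [v Hv].
  destruct (bal2_phases s m (S m) (init_config s) (phase_start_init s _)) as [Hrun Hlb].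
  exists (phases s (S m) m), v; split; [exact Hv|split; [exact Hrun|]].
  intros cost Hcost; specialize (Hlb _ Hcost); rewrite S_INR in Hlb.
  assert (Hv0 : 0 <= v) by (destruct Hv as [[S0 [_ <-]] _]; apply sched_cost_ge0).
  pose proof (affine_lt_quadratic rho c v (INR m) Hv0 (opt_phases_le s m v Hm1 Hv) Hm).
  lra.
Qed.
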